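(* There is a $\mathsf{conv}$-MAD family, i.e. a MAD family $\mathcal{A}$ on $\omega$ such that $\mathcal{I}(\mathcal{A})\not\leq_K\mathsf{conv}$.
   Context: A MAD family is a maximal family of infinite subsets of $\omega$ with pairwise finite intersections; $\mathcal{I}(\mathcal{A})$ is the ideal on $\omega$ generated by $\mathcal{A}$ and the finite sets. $\mathsf{conv}$ is the ideal on $[0,1]\cap\mathbb{Q}$ generated by all sequences (of rationals in $[0,1]$) converging to a real number. For an ideal $\mathcal{I}$ on $X$ and $\mathcal{J}$ on $Y$ ($X,Y$ countable), $\mathcal{I}\le_K\mathcal{J}$ means there is $f:Y\to X$ with $f^{-1}(A)\in\mathcal{J}$ for all $A\in\mathcal{I}$. *)

From HB Require Import structures.
From mathcomp Require Import all_boot all_order all_algebra.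
From mathcomp Require Import all_classical all_reals all_analysis.
From mathcomp Require Import Rstruct Rstruct_topology.
Set Implicit Arguments. Unset Strict Implicit. Unset Printing Implicit Defensive.
Import Order.TTheory GRing.Theory Num.Theory.
Local Open Scope classical_set_scope.
Local Open Scope ring_scope.

Definition ad_family (A : set (set nat)) : Prop :=
  (forall a, A a -> infinite_set a) /\
  (forall a b, A a -> A b -> a <> b -> finite_set (a `&` b)).

Definition MAD (A : set (set nat)) : Prop :=
  ad_family A /\ infinite_set A /\
  (forall A' : set (set nat), A `<=` A' -> ad_family A' -> A' = A).

(* I(A): the ideal generated by A and the finite sets:
   X is covered, up to a finite set, by finitely many members of A. *)
Definition ideal_of (A : set (set nat)) (X : set nat) : Prop :=
  exists (n : nat) (As : nat -> set nat),
    (forall i, (i < n)%N -> A (As i)) /\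
    finite_set (X `\` \bigcup_(i in [set i | (i < n)%N]) As i).

Definition Q01 := {q : rat | (0 <= q <= 1)%R}.

Definition conv_seq (s : nat -> Q01) : Prop :=
  exists x : Rdefinitions.R, (fun n => (ratr (sval (s n)) : Rdefinitions.R)) @ \oo --> x.

(* conv: the ideal on Q01 generated by (ranges of) convergent sequences:
   X is contained in the union of the ranges of finitely many of them. *)
Definition conv (X : set Q01) : Prop :=
  exists (n : nat) (ss : nat -> nat -> Q01),
    (forall i, (i < n)%N -> conv_seq (ss i)) /\
    X `<=` \bigcup_(i in [set i | (i < n)%N]) range (ss i).

Definition katetov_le {X Y : Type} (I : set X -> Prop) (J : set Y -> Prop) : Prop :=
  exists f : Y -> X, forall A : set X, I A -> J (f @^-1` A).

(** If [X] is in [conv], then [f @^-1` X] has only finitely many real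
    accumulation points.  A function [f : Q01 -> nat] is no Katetov reduction
    of [I(A)] to [conv] as soon as some fiber of [f], or the preimage of some
    member of [A], is not in [conv].  Otherwise choose an injective sequence
    [x k -> y] at which none of these preimages accumulates, and rationals
    [q k j] in shells around [x k] of radius [2^-(k+j+2)]: the set [a] of the
    values [f (q k j)] is almost disjoint from [A], and [f @^-1` a] accumulates
    at every [x k], so [a] blocks [f].  Doing this along a well-order of all [f]
    and extending to a MAD family proves the theorem.

    At each stage every earlier stage contributes countably many points to
    avoid.  Instead of CH we run the recursion along the least initial segment
    that is not [small]: continuum many pairwise disjoint convergent sequences,
    taken from the Cantor set, show that a non-small segment times [nat] maps
    onto [Q01 -> nat]. *)

From mathcomp Require Import all_boot all_order all_algebra.
From mathcomp Require Import all_classical all_reals all_analysis.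
From mathcomp Require Import Rstruct Rstruct_topology lra wochoice.
Set Implicit Arguments. Unset Strict Implicit. Unset Printing Implicit Defensive.
Import Order.TTheory GRing.Theory Num.Theory.
Local Open Scope classical_set_scope.
Local Open Scope ring_scope.

Local Notation RR := Rdefinitions.R.

(** * Accumulation points of subsets of [Q01] *)

Definition q01R (q : Q01) : RR := ratr (sval q).

Definition locally_finite (X : set Q01) (y : RR) :=
  exists2 e : RR, 0 < e & finite_set [set q | X q /\ `|q01R q - y| < e].

Definition accum (X : set Q01) : set RR := [set y | ~ locally_finite X y].

Lemma locally_finite_sub X Y y : X `<=` Y -> locally_finite Y y -> locally_finite X y.
Proof.
move=> XY [e e0 fe]; exists e => //.
by apply: sub_finite_set fe => q [/XY].
Qed.

Lemma locally_finiteU X Y y :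
  locally_finite X y -> locally_finite Y y -> locally_finite (X `|` Y) y.
Proof.
move=> [e1 e10 f1] [e2 e20 f2]; exists (Num.min e1 e2); first by rewrite lt_min e10.
apply: (@sub_finite_set _ _
  ([set q | X q /\ `|q01R q - y| < e1] `|` [set q | Y q /\ `|q01R q - y| < e2])).
  by move=> q [[Xq|Yq]]; rewrite lt_min => /andP[h1 h2]; [left|right].
by rewrite finite_setU.
Qed.

Lemma locally_finite0 y : locally_finite set0 y.
Proof.
exists 1 => //; rewrite (_ : [set _ | _] = set0) ?finite_set0 //.
by apply/seteqP; split=> q [].
Qed.

Lemma locally_finite_bigcup n (X : nat -> set Q01) y :
  (forall i, (i < n)%N -> locally_finite (X i) y) ->
  locally_finite (\bigcup_(i in [set i | (i < n)%N]) X i) y.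
Proof.
elim: n => [|n IH] lf.
  by apply: locally_finite_sub (locally_finite0 y) => q [i].
apply: (@locally_finite_sub _ ((\bigcup_(i in [set i | (i < n)%N]) X i) `|` X n)).
  by move=> q [i /=]; rewrite ltnS leq_eqVlt => /orP[/eqP->|lt]; [right|left; exists i].
by apply: locally_finiteU; [apply: IH => i /ltnW/lf|exact: lf].
Qed.

Lemma locally_finite_range (s : nat -> Q01) (l y : RR) :
  (fun n => q01R (s n)) @ \oo --> l -> y != l -> locally_finite (range s) y.
Proof.
move=> /(@cvgrPdist_lt _ RR^o) cv yl.
have d0 : 0 < `|l - y| by rewrite normr_gt0 subr_eq0 eq_sym.
have [N _ closeN] := cv _ (divr_gt0 d0 (ltr0n _ 2)).
exists (`|l - y| / 2); first by rewrite divr_gt0.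
apply: sub_finite_set (finite_image s (finite_II N)) => q [[n _ <-] near_y].
exists n => //=; rewrite ltnNge; apply/negP => /closeN /= near_l.
have := ler_distD (q01R (s n)) l y.
move: near_l near_y d0; move: `|l - q01R (s n)| `|q01R (s n) - y| `|l - y| => a b c; lra.
Qed.

Lemma conv_accum_finite X : conv X -> finite_set (accum X).
Proof.
move=> [n [ss [ss_cvg sub]]].
apply: (@sub_finite_set _ _ (\bigcup_(i in [set i | (i < n)%N]) accum (range (ss i)))).
  move=> y Xy; apply: contrapT => lf; apply: Xy.
  apply: locally_finite_sub sub _; apply: locally_finite_bigcup => i lt.
  by apply: contrapT => h; apply: lf; exists i.
apply: bigcup_finite => // i /ss_cvg [l cvl].
apply: (@sub_finite_set _ _ [set l]); last exact: finite_set1.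
move=> y /= acc; apply: contrapT => /eqP yl; exact/acc/(locally_finite_range cvl).
Qed.

Lemma accum_seq X y (g : nat -> Q01) (M : set nat) :
  injective g -> infinite_set M -> (forall m, M m -> X (g m)) ->
  (forall e, 0 < e -> exists J, forall m, (J <= m)%N -> `|q01R (g m) - y| < e) ->
  accum X y.
Proof.
move=> ig iM MX cv [e e0 fin]; have [J closeJ] := cv e e0.
apply: iM; apply: (@sub_finite_set _ _ (`I_J `|` g @^-1` [set q | X q /\ `|q01R q - y| < e])).
  by move=> m Mm; case: (ltnP m J) => h; [left|right; split; [exact: MX|exact: closeJ]].
by rewrite finite_setU; split => //; apply: finite_preimage => // a b _ _ /ig.
Qed.

Lemma exprn_lt_eventually (c e : RR) : 0 < c -> c < 1 -> 0 < e ->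
  exists J, forall j, (J <= j)%N -> c ^+ j < e.
Proof.
move=> c0 c1 e0.
have /(@cvgrPdist_lt _ RR^o) cv : (fun n => c ^+ n : RR^o) @ \oo --> (0 : RR^o).
  by apply: cvg_expr; rewrite ger0_norm // ltW.
have [J _ closeJ] := cv _ e0; exists J => j /closeJ.
by rewrite /= sub0r normrN ger0_norm // ltW // exprn_gt0.
Qed.

(** * Adding one almost disjoint set *)

Definition radius k j : RR := 2^-1 ^+ (k + j + 2).

Lemma radius_gt0 k j : 0 < radius k j.
Proof. by rewrite exprn_gt0 // invr_gt0. Qed.

Lemma radius_le k j m : (m <= k + j + 2)%N -> radius k j <= 2^-1 ^+ m.
Proof. by apply: ler_wiXn2l; rewrite ?invr_ge0 // invf_le1 // ler1n. Qed.

Lemma radiusS k j : radius k j.+1 = radius k j / 2.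
Proof. by rewrite /radius (addnS k j) (addSn (k + j) 2) exprS mulrC. Qed.

Section OneStep.
Variables (f : Q01 -> nat) (B : set (set nat)) (x : nat -> RR) (y : RR).
Hypotheses (x_inj : injective x) (x_range : forall k, 4^-1 <= x k <= 3/4)
  (x_cvg : x @ \oo --> y)
  (lf_y : forall b, B b -> locally_finite (f @^-1` b) y)
  (lf_x : forall b k, B b -> locally_finite (f @^-1` b) (x k))
  (lf_fiber : forall n k, locally_finite (f @^-1` [set n]) (x k)).

Lemma exists_shell_points : exists q : nat -> nat -> Q01,
  forall k j, x k + radius k j / 2 < q01R (q k j) < x k + radius k j.
Proof.
suff /choice [q qP] : forall kj : nat * nat, exists p : Q01,
    x kj.1 + radius kj.1 kj.2 / 2 < q01R p < x kj.1 + radius kj.1 kj.2.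
  by exists (fun k j => q (k, j)) => k j; exact: (qP (k, j)).
move=> [k j] /=.
have r0 := radius_gt0 k j.
have r_le : radius k j <= 4^-1.
  have -> : (4^-1 : RR) = 2^-1 ^+ 2 by rewrite expr2 -invfM -natrM.
  by rewrite radius_le // leq_addl.
have [p] := @rat_in_itvoo RR (x k + radius k j / 2) (x k + radius k j) ltac:(lra).
rewrite in_itv /= => /andP[p_lb p_ub]; have /andP[x_lb x_ub] := x_range k.
have p01 : (0 <= p <= 1)%R.
  by rewrite -(ler0q RR) -(ler_rat RR) rmorph1; apply/andP; split; lra.
by exists (exist _ p p01); rewrite /q01R /= p_lb p_ub.
Qed.

Variable q : nat -> nat -> Q01.
Hypothesis q_shell : forall k j, x k + radius k j / 2 < q01R (q k j) < x k + radius k j.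

Lemma shell_decreasing k : {homo (fun j => q01R (q k j)) : j1 j2 / (j1 < j2)%N >-> j2 < j1}.
Proof.
move=> j1 j2 lt12; have := q_shell k j1; have := q_shell k j2.
have : radius k j2 <= radius k j1 / 2 by rewrite -radiusS radius_le // !leq_add2r leq_add2l.
move=> r /andP[a1 a2] /andP[b1 b2]; have := radius_gt0 k j2; lra.
Qed.

Lemma shell_inj k : injective (q k).
Proof.
move=> j1 j2 e; apply/eqP; rewrite eq_sym; apply: contraT.
by rewrite neq_ltn => /orP[] /(shell_decreasing k); rewrite e ltxx.
Qed.

Lemma shell_cvg k e : 0 < e -> exists J, forall j, (J <= j)%N -> `|q01R (q k j) - x k| < e.
Proof.
move=> e0; have [J smallJ] := @exprn_lt_eventually 2^-1 e ltac:(lra) ltac:(lra) e0.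
exists J => j Jj; have /andP[a1 a2] := q_shell k j; have := radius_gt0 k j.
have : radius k j <= 2^-1 ^+ j by apply: radius_le; rewrite -addnA (addnC j) addnA leq_addl.
have := smallJ j Jj; rewrite ger0_norm; lra.
Qed.

Definition shell_image := [set n | exists k j, n = f (q k j)].

Lemma accum_shell_image k : accum (f @^-1` shell_image) (x k).
Proof.
apply: (@accum_seq _ _ (q k) setT (@shell_inj k) infinite_nat); last exact: shell_cvg.
by move=> j _; exists k, j.
Qed.

Lemma shell_image_not_conv : ~ conv (f @^-1` shell_image).
Proof.
move=> /conv_accum_finite fin; apply: infinite_nat.
apply: (@sub_finite_set _ _ (x @^-1` accum (f @^-1` shell_image))).
  by move=> k _; exact: accum_shell_image.
by apply: finite_preimage => // a b _ _ /x_inj.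
Qed.

Lemma shell_image_infinite : infinite_set shell_image.
Proof.
move=> fin.
have [n infn] : exists n, infinite_set [set j | f (q 0 j) = n].
  apply: contrapT => allfin; apply: infinite_nat.
  apply: (@sub_finite_set _ _ (\bigcup_(n in shell_image) [set j | f (q 0 j) = n])).
    by move=> j _; exists (f (q 0 j)) => //; exists 0%N, j.
  apply: bigcup_finite => // n _; apply: contrapT => infn; apply: allfin; by exists n.
apply: (@accum_seq (f @^-1` [set n]) (x 0%N) (q 0) _ (@shell_inj 0) infn _ (@shell_cvg 0)).
  by move=> j /= ->.
exact: lf_fiber.
Qed.

Lemma shell_cvg_limit e : 0 < e ->
  exists k0, forall k j, (k0 <= k)%N -> `|q01R (q k j) - y| < e.
Proof.
move=> e0; have e20 : 0 < e / 2 by rewrite divr_gt0.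
have /(@cvgrPdist_lt _ RR^o) /(_ _ e20) [K1 _ closeK1] := x_cvg.
have [K2 smallK2] := @exprn_lt_eventually 2^-1 _ ltac:(lra) ltac:(lra) e20.
exists (maxn K1 K2) => k j; rewrite geq_max => /andP[/closeK1 /= xk_y /smallK2 rk].
have : radius k j <= 2^-1 ^+ k by rewrite radius_le // -addnA leq_addr.
have /andP[a1 a2] := q_shell k j; have := radius_gt0 k j.
have := ler_distD (x k) (q01R (q k j)) y; rewrite (distrC y) in xk_y.
rewrite (ger0_norm (x := q01R (q k j) - x k)); last by lra.
by move: xk_y; move: `|x k - y| `|q01R (q k j) - y| => u v; lra.
Qed.

Lemma shell_row_meets_finite b k : B b ->
  finite_set [set n | exists j, n = f (q k j) /\ b n].
Proof.
move=> Bb; have [e e0 finZ] := lf_x k Bb; have [J closeJ] := shell_cvg k e0.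
apply: (@sub_finite_set _ _ (f @` [set p | (f @^-1` b) p /\ `|q01R p - x k| < e] `|`
   (fun j => f (q k j)) @` `I_J)).
  move=> n [j [-> bn]]; case: (ltnP j J) => hj; first by right; exists j.
  by left; exists (q k j) => //; split => //; apply: closeJ.
by rewrite finite_setU; split; exact: finite_image.
Qed.

Lemma shell_image_ad b : B b -> finite_set (shell_image `&` b).
Proof.
move=> Bb; have [e e0 finZ] := lf_y Bb; have [k0 close_y] := shell_cvg_limit e0.
apply: (@sub_finite_set _ _ (f @` [set p | (f @^-1` b) p /\ `|q01R p - y| < e] `|`
   \bigcup_(k in `I_k0) [set n | exists j, n = f (q k j) /\ b n])).
  move=> n [[k [j ->]] bn]; case: (ltnP k k0) => hk; first by right; exists k => //; exists j.
  by left; exists (q k j) => //; split => //; apply: close_y.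
rewrite finite_setU; split; first exact: finite_image.
by apply: bigcup_finite => // k _; apply: shell_row_meets_finite.
Qed.

End OneStep.

Lemma exists_ad_set_not_conv (f : Q01 -> nat) (B : set (set nat)) (x : nat -> RR) (y : RR) :
  injective x -> (forall k, 4^-1 <= x k <= 3/4) -> x @ \oo --> y ->
  (forall b, B b -> locally_finite (f @^-1` b) y) ->
  (forall b k, B b -> locally_finite (f @^-1` b) (x k)) ->
  (forall n k, locally_finite (f @^-1` [set n]) (x k)) ->
  exists2 a : set nat, infinite_set a /\ ~ conv (f @^-1` a) &
    forall b, B b -> finite_set (a `&` b).
Proof.
move=> x_inj x_range x_cvg lf_y lf_x lf_fiber.
have [q q_shell] := exists_shell_points x_range.
exists (shell_image f q); first split.
- exact: (shell_image_infinite lf_fiber q_shell).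
- exact: (shell_image_not_conv x_inj q_shell).
- exact: (shell_image_ad x_cvg lf_y lf_x q_shell).
Qed.

(** * Continuum many disjoint convergent sequences *)

Lemma third_expr_gt0 n : 0 < 3^-1 ^+ n :> RR.
Proof. by rewrite exprn_gt0 // invr_gt0. Qed.

Definition cantor_digit (u : nat -> bool) k : RR := if u k then 2 * 3^-1 ^+ k.+1 else 0.

Definition cantor_partial u n : RR := \sum_(k < n) cantor_digit u k.

Lemma cantor_digit_bounds u k : 0 <= cantor_digit u k <= 3^-1 ^+ k - 3^-1 ^+ k.+1.
Proof. by rewrite /cantor_digit exprSr; have := third_expr_gt0 k; case: (u k) => /=; lra. Qed.

Lemma cantor_partialS u n : cantor_partial u n.+1 = cantor_partial u n + cantor_digit u n.
Proof. by rewrite /cantor_partial big_ord_recr. Qed.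

Lemma cantor_partial_bounds u n d :
  cantor_partial u n <= cantor_partial u (n + d)
                     <= cantor_partial u n + (3^-1 ^+ n - 3^-1 ^+ (n + d)).
Proof.
elim: d => [|d IH]; first by rewrite addn0; lra.
by rewrite addnS cantor_partialS; have := cantor_digit_bounds u (n + d); lra.
Qed.

Lemma cantor_partial_nondecreasing u : {homo cantor_partial u : n m / (n <= m)%N >-> n <= m}.
Proof. by move=> n m /subnKC <-; have /andP[] := cantor_partial_bounds u n (m - n). Qed.

Lemma cantor_partial_cvg u : cvgn (cantor_partial u).
Proof.
apply: nondecreasing_is_cvgn; first exact: cantor_partial_nondecreasing.
exists 1 => _ [n _ <-]; have := cantor_partial_bounds u 0 n.
by rewrite add0n /cantor_partial big_ord0 expr0; have := third_expr_gt0 n; lra.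
Qed.

Definition cantor_sum u : RR := limn (cantor_partial u).

Lemma cantor_sum_bounds u n :
  cantor_partial u n <= cantor_sum u <= cantor_partial u n + 3^-1 ^+ n.
Proof.
apply/andP; split.
  by apply: nondecreasing_cvgn_le; [exact: cantor_partial_nondecreasing|exact: cantor_partial_cvg].
apply: limr_le; first exact: cantor_partial_cvg.
near=> m; have := cantor_partial_bounds u n (m - n).
rewrite subnKC; last by near: m; exact: nbhs_infty_ge.
by have := third_expr_gt0 m; lra.
Unshelve. all: by end_near.
Qed.

Definition cantor_point u : RR := 4^-1 + cantor_sum u / 2.

Lemma cantor_point_range u : 4^-1 <= cantor_point u <= 3/4.
Proof.
have := cantor_sum_bounds u 0.
by rewrite /cantor_partial big_ord0 expr0 /cantor_point; lra.
Qed.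

Lemma cantor_partial_eq u v n : (forall i, (i < n)%N -> u i = v i) ->
  cantor_partial u n = cantor_partial v n.
Proof. by move=> uv; apply: eq_bigr => i _; rewrite /cantor_digit uv. Qed.

Lemma cantor_point_close u v n : (forall i, (i < n)%N -> u i = v i) ->
  `|cantor_point u - cantor_point v| <= 3^-1 ^+ n.
Proof.
move=> uv; have := cantor_sum_bounds u n; have := cantor_sum_bounds v n.
rewrite (cantor_partial_eq uv) /cantor_point ler_norml; have := third_expr_gt0 n.
by move=> ? /andP[? ?] /andP[? ?]; apply/andP; split; lra.
Qed.

Lemma cantor_point_lt u v n : (forall i, (i < n)%N -> u i = v i) ->
  u n = false -> v n = true -> cantor_point u < cantor_point v.
Proof.
move=> uv un vn; have := cantor_sum_bounds u n.+1; have := cantor_sum_bounds v n.+1.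
rewrite !cantor_partialS (cantor_partial_eq uv) /cantor_digit un vn /cantor_point exprSr.
by have := third_expr_gt0 n; move=> ? /andP[? ?] /andP[? ?]; lra.
Qed.

Lemma cantor_point_inj : injective cantor_point.
Proof.
move=> u v e; apply: contrapT => uv.
have /ex_minnP [n uvn n_min] : exists n, u n != v n.
  by apply: contrapT => h; apply/uv/funext => n; apply/eqP/negP => /negP ?; apply: h; exists n.
have agree i : (i < n)%N -> u i = v i.
  by move=> lt; apply/eqP; apply: contraTT lt; rewrite -leqNgt; exact: n_min.
move: uvn; case un: (u n); case vn: (v n) => // _.
  by have := cantor_point_lt (fun i lt => esym (agree i lt)) vn un; rewrite e ltxx.
by have := cantor_point_lt agree un vn; rewrite e ltxx.
Qed.

(** Even positions carry [u], so the test sequences of distinct [u] share no point. *)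
Definition marked (u : nat -> bool) k i : bool := if odd i then i./2 == k else u i./2.

Definition unmarked (u : nat -> bool) i : bool := if odd i then false else u i./2.

Lemma marked_double u k n : marked u k n.*2 = u n.
Proof. by rewrite /marked odd_double doubleK. Qed.

Lemma unmarked_double u n : unmarked u n.*2 = u n.
Proof. by rewrite /unmarked odd_double doubleK. Qed.

Lemma marked_unmarked u k i : (i < k.*2.+1)%N -> marked u k i = unmarked u i.
Proof.
rewrite /marked /unmarked; case oi: (odd i) => // lt.
apply/negbTE/eqP => ik; move: lt; have := odd_double_half i.
by rewrite oi ik /= add1n => <-; rewrite ltnn.
Qed.

Lemma marked_inj u : injective (marked u).
Proof.
move=> k k' /(congr1 (fun w => w k.*2.+1)).
have half_odd : (k.*2.+1)./2 = k by rewrite -[k.*2.+1]/(true + k.*2)%N half_bit_double.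
have odd_odd : odd k.*2.+1 by rewrite /= odd_double.
by rewrite /marked odd_odd half_odd eqxx => /esym/eqP.
Qed.

Definition test_point u k := cantor_point (marked u k).

Definition test_limit u := cantor_point (unmarked u).

Lemma test_point_inj u : injective (test_point u).
Proof. by move=> k k' /cantor_point_inj/marked_inj. Qed.

Lemma test_point_cvg u : test_point u @ \oo --> test_limit u.
Proof.
apply/(@cvgrPdist_lt _ RR^o) => e e0.
have [J smallJ] := @exprn_lt_eventually 3^-1 e ltac:(lra) ltac:(lra) e0.
near=> k; rewrite /test_limit /test_point.
apply: le_lt_trans (cantor_point_close (fun i lt => esym (@marked_unmarked u k i lt))) _.
apply: le_lt_trans (smallJ k _); last by near: k; exact: nbhs_infty_ge.
by apply: ler_wiXn2l; rewrite ?invr_ge0 ?invf_le1 ?ler1n // leqW // -addnn leq_addr.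
Unshelve. all: by end_near.
Qed.

(** The bounds [1/4 <= x k <= 3/4] keep the shells, of radius at most [1/4], inside [[0, 1]]. *)
Definition avoiding_sequence (Z : set RR) (x : nat -> RR) (y : RR) :=
  [/\ injective x, (forall k, 4^-1 <= x k <= 3/4), x @ \oo --> y,
      (forall k, ~ Z (x k)) & ~ Z y].

Lemma not_avoided_cantor_inj (Z : set RR) : ~ (exists x y, avoiding_sequence Z x y) ->
  exists2 z : (nat -> bool) -> RR, injective z & forall u, Z (z u).
Proof.
move=> not_avoided.
have /choice [w wP] : forall u, exists w, Z (cantor_point w) /\ forall n, w n.*2 = u n.
  move=> u; apply: contrapT => none; apply: not_avoided.
  exists (test_point u), (test_limit u); split.
  - exact: test_point_inj.
  - by move=> k; exact: cantor_point_range.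
  - exact: test_point_cvg.
  - by move=> k Zk; apply: none; exists (marked u k); split => // n; rewrite marked_double.
  - by move=> Zy; apply: none; exists (unmarked u); split => // n; rewrite unmarked_double.
exists (fun u => cantor_point (w u)) => [u v /cantor_point_inj wuv|u]; last by case: (wP u).
by apply: funext => n; case: (wP u) => _ <-; case: (wP v) => _ <-; rewrite wuv.
Qed.

Lemma no_inj_bool_seq_nat : ~ exists j : (nat -> bool) -> nat, injective j.
Proof.
move=> [j j_inj].
pose dec n := if pselect (exists u, j u = n) is left p then projT1 (cid p) else fun _ => false.
have decK u : dec (j u) = u.
  rewrite /dec; case: pselect => [p|]; last by move=> h; exfalso; apply: h; exists u.
  by case: (cid p) => w /= /j_inj.
pose diag n := ~~ dec n n.
have : dec (j diag) (j diag) = ~~ dec (j diag) (j diag).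
  exact: (congr1 (fun w => w (j diag)) (decK diag)).
by case: (dec _ _).
Qed.

Definition graph_code (T U : countType) (g : T -> U) (n : nat) : bool :=
  if (unpickle n : option (T * U)) is Some (t, m) then g t == m else false.

Lemma graph_code_inj (T U : countType) : injective (@graph_code T U).
Proof.
move=> g1 g2 g12; apply: funext => t.
have := congr1 (fun c => c (pickle (t, g1 t))) g12.
by rewrite /graph_code pickleK eqxx => /esym/eqP.
Qed.

Lemma countableU T (A B : set T) : countable A -> countable B -> countable (A `|` B).
Proof.
move=> cA cB; rewrite (_ : A `|` B = \bigcup_(b in [set: bool]) if b then A else B).
  by apply: bigcup_countable => // -[].
by apply/seteqP; split=> [z [Az|Bz]|z [[] _ h]]; [exists true|exists false|left|right].
Qed.

(** Under CH every proper initial segment of a well-order of [Q01 -> nat] of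
    type continuum is countable, hence small. *)
Definition small {X : Type} (S : set X) := forall K : X -> set RR,
  (forall s, S s -> countable (K s)) -> forall C : set RR, countable C ->
  exists x y, avoiding_sequence (\bigcup_(s in S) K s `|` C) x y.

Lemma not_small_surj {X : Type} (S : set X) : ~ small S ->
  exists h : X * nat -> (Q01 -> nat), forall g, exists s n, S s /\ h (s, n) = g.
Proof.
move=> not_small.
have [K [K_cnt [C C_cnt not_avoided]]] : exists K : X -> set RR,
    (forall s, S s -> countable (K s)) /\ exists2 C, countable C &
    ~ exists x y, avoiding_sequence (\bigcup_(s in S) K s `|` C) x y.
  apply: contrapT => h; apply: not_small => K K_cnt C C_cnt; apply: contrapT => nav.
  by apply: h; exists K; split => //; exists C.
have [z z_inj zZ] := not_avoided_cantor_inj not_avoided.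
pose code (g : Q01 -> nat) := z (graph_code g).
have code_inj : injective code by move=> g1 g2 /z_inj /graph_code_inj.
have [s0 Ss0] : exists s, S s.
  apply: contrapT => noS; apply: no_inj_bool_seq_nat.
  have /countable_injP [i i_inj] := C_cnt.
  have inC u : C (z u) by case: (zZ u) => // -[s Ss _]; exfalso; apply: noS; exists s.
  by exists (fun u => i (z u)) => u v /i_inj; rewrite !inE => /(_ (inC u) (inC v)) /z_inj.
have /choice [E E_surj] : forall s, exists E : nat -> Q01 -> nat,
    S s -> code @^-1` (K s `|` C) `<=` range E.
  move=> s; case: (pselect (S s)) => Ss; last by exists point.
  have : countable (code @^-1` (K s `|` C)).
    apply: sub_countable (countableU (K_cnt s Ss) C_cnt).
    by apply: card_ge_preimage => g1 g2 _ _ /code_inj.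
  by move=> /pcard_surjP [E E_surj]; exists E => _.
exists (fun p => E p.1 p.2) => g.
case: (zZ (graph_code g)) => [[s Ss Ksg]|Cg].
  by have [n _ <-] := E_surj s Ss g (or_introl Ksg); exists s, n.
by have [n _ <-] := E_surj s0 Ss0 g (or_intror Cg); exists s0, n.
Qed.

Section WellOrder.
Variables (T : Type) (R : rel T).
Hypothesis R_wo : well_order R.

Lemma well_order_min (P : T -> Prop) : (exists x, P x) ->
  exists z, P z /\ forall y, P y -> R z y.
Proof.
move=> [x Px].
have [|z [[/asboolP Pz z_lb] _]] := R_wo (A := [pred w | `[< P w >]]).
  by exists x; apply/asboolP.
by exists z; split => // y Py; apply/z_lb/asboolP.
Qed.

Lemma well_order_refl x : R x x.
Proof. by have [z [-> ]] := @well_order_min (eq^~ x) (ex_intro _ x erefl); apply. Qed.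

Lemma well_order_total x y : R x y \/ R y x.
Proof.
have [z [[->|->] z_min]] :=
  @well_order_min (fun w => w = x \/ w = y) (ex_intro _ x (or_introl erefl)).
  by left; apply: z_min; right.
by right; apply: z_min; left.
Qed.

Lemma well_order_anti x y : R x y -> R y x -> x = y.
Proof.
move=> Rxy Ryx; pose A := [pred w | `[< w = x \/ w = y >]].
have [|z [_ z_uniq]] := R_wo (A := A); first by exists x; apply/asboolP; left.
have min_of w : w = x \/ w = y -> minimum_of R A w.
  move=> wxy; split; first exact/asboolP.
  by move=> v /asboolP [] ->; case: wxy => ->; rewrite ?well_order_refl.
by rewrite -(z_uniq x (min_of x (or_introl erefl))) (z_uniq y (min_of y (or_intror erefl))).
Qed.

Definition lex_lt (s t : T * nat) :=
  (R s.1 t.1 /\ s.1 <> t.1) \/ (s.1 = t.1 /\ (s.2 < t.2)%N).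

Lemma lex_lt_trichotomy s t : s = t \/ lex_lt s t \/ lex_lt t s.
Proof.
case: s t => [i n] [j m]; rewrite /lex_lt /=.
have [<-|ij] := pselect (i = j).
  by case: (ltngtP n m) => [lt|lt|->]; [right; left; right|right; right; right|left].
by case: (well_order_total i j) => h; [right; left; left|right; right; left; split => // /esym].
Qed.

Lemma lex_lt_min (P : T * nat -> Prop) : (exists t, P t) ->
  exists t, P t /\ forall s, lex_lt s t -> ~ P s.
Proof.
move=> [[i n] Pin].
have [i0 [[n1 Pn1] i0_min]] := @well_order_min (fun i => exists n, P (i, n))
  (ex_intro _ i (ex_intro _ n Pin)).
have /ex_minnP [n0 /asboolP Pn0 n0_min] : exists n, `[< P (i0, n) >] by exists n1; apply/asboolP.
exists (i0, n0); split => // -[j m] [[/= Rj ne]|[/= -> lt]] Pjm.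
  by apply/ne/well_order_anti => //; apply: i0_min; exists m.
by have := n0_min m (asboolT Pjm); rewrite leqNgt lt.
Qed.

End WellOrder.

(** * Almost disjoint families *)

Definition column (m : nat) : set nat := [set n | exists k : nat, n = pickle (m, k)].

Definition columns : set (set nat) := range column.

Lemma column_infinite m : infinite_set (column m).
Proof.
move=> fin; apply: infinite_nat.
apply: (@sub_finite_set _ _ ((fun k => pickle (m, k)) @^-1` column m)).
  by move=> k _; exists k.
by apply: finite_preimage fin => k k' _ _ /(pcan_inj pickleK) [].
Qed.

Lemma columns_ad : ad_family columns.
Proof.
split=> [_ [m _ <-]|_ _ [m _ <-] [m' _ <-] mm']; first exact: column_infinite.
rewrite (_ : _ `&` _ = set0) //; apply/seteqP; split=> // _ [[k ->] [k' /(pcan_inj pickleK) [e _]]].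
by apply: mm'; rewrite e.
Qed.

Lemma columns_infinite : infinite_set columns.
Proof.
move=> fin; apply: infinite_nat.
apply: (@sub_finite_set _ _ (column @^-1` columns)); first by move=> m _; exists m.
apply: finite_preimage fin => m m' _ _ e.
have : column m (pickle (m, 0%N)) by exists 0%N.
by rewrite e => -[k /(pcan_inj pickleK) []].
Qed.

Lemma ad_family_sub A B : A `<=` B -> ad_family B -> ad_family A.
Proof. by move=> AB [inf ad]; split=> [a /AB|a b /AB Ba /AB Bb]; [exact: inf|exact: ad]. Qed.

Lemma ad_family_add A a : ad_family A -> infinite_set a ->
  (forall b, A b -> finite_set (a `&` b)) -> ad_family (A `|` [set a]).
Proof.
move=> [inf ad] inf_a ad_a; split=> [b [/inf //|-> //]|b c [Ab|->] [Ac|->] // bc].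
- exact: ad.
- by rewrite setIC; exact: ad_a.
- exact: ad_a.
Qed.

Lemma ad_family_chain (A0 : set (set nat)) (F : set (set (set nat))) :
  ad_family A0 -> (forall A, F A -> ad_family (A0 `|` A)) -> total_on F subset ->
  ad_family (A0 `|` \bigcup_(A in F) A).
Proof.
move=> ad0 adF tot.
suff common a b : (A0 `|` \bigcup_(A in F) A) a -> (A0 `|` \bigcup_(A in F) A) b ->
    exists2 Q, ad_family Q & Q a /\ Q b.
  split=> [a Ua|a b Ua Ub ab].
    by have [Q [inf _] [Qa _]] := common a a Ua Ua; exact: inf.
  by have [Q [_ ad] [Qa Qb]] := common a b Ua Ub; exact: ad.
move=> [A0a|[A1 F1 A1a]] [A0b|[A2 F2 A2b]].
- by exists A0.
- by exists (A0 `|` A2); [exact: adF|split; [left|right]].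
- by exists (A0 `|` A1); [exact: adF|split; [right|left]].
- have [sub|sub] := tot _ _ F1 F2.
    by exists (A0 `|` A2); [exact: adF|split; right => //; exact: sub].
  by exists (A0 `|` A1); [exact: adF|split; right => //; exact: sub].
Qed.

Lemma ad_family_extend_MAD A0 : ad_family A0 -> infinite_set A0 ->
  exists2 A, MAD A & A0 `<=` A.
Proof.
move=> ad0 inf0.
have [A1 [ad1 max1]] := @Zorn_bigcup _ [set A | ad_family (A0 `|` A)]
  (fun F FP tot => ad_family_chain ad0 FP tot).
exists (A0 `|` A1); last by move=> a; left.
split=> //; split; first by apply: sub_infinite_set inf0 => a; left.
move=> A' sub adA'; apply/seteqP; split=> [a A'a|]; last exact: sub.
right; apply: contrapT => nA1a; apply: (max1 A').
  by split=> [b A1b|sub']; [apply: sub; right|exact/nA1a/sub'].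
by apply: ad_family_sub adA' => b [A0b|//]; apply: sub; left.
Qed.

Definition blocks (A : set (set nat)) (f : Q01 -> nat) :=
  (exists n, ~ conv (f @^-1` [set n])) \/ (exists2 b, A b & ~ conv (f @^-1` b)).

Lemma blocks_sub A A' f : A `<=` A' -> blocks A f -> blocks A' f.
Proof. by move=> AA' [fiber|[b /AA' A'b nc]]; [left|right; exists b]. Qed.

Lemma blocks_not_katetov A : (forall f, blocks A f) -> ~ katetov_le (ideal_of A) conv.
Proof.
move=> blk [f f_red]; case: (blk f) => [[n]|[b Ab]]; apply; apply: f_red.
  by exists 0%N, (fun=> set0); split=> //; apply: finite_setD; exact: finite_set1.
exists 1%N, (fun=> b); split=> [i _|]; first exact: Ab.
by apply: (@sub_finite_set _ _ set0) => // m [bm]; apply; exists 0%N.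
Qed.

(** * The recursion *)

Section Construction.
Variables (R : rel (Q01 -> nat)) (I : set (Q01 -> nat)) (h : (Q01 -> nat) * nat -> Q01 -> nat).

Local Notation run := (set ((Q01 -> nat) * nat * set nat)).

Definition defined_at (G : run) t := exists a, G (t, a).

Definition stage_sets (G : run) : set (set nat) := [set a | (exists t, G (t, a)) /\ a <> set0].

Definition family (G : run) := columns `|` stage_sets G.

(** A run of the recursion up to some stage: the stages [t = (i, n)] with [I i]
    are ordered lexicographically, and stage [t] takes care of [h t].  A stage
    whose function is already blocked records [set0], which is not added to
    the family. *)
Definition valid (G : run) := [/\ (forall t a a', G (t, a) -> G (t, a') -> a = a'),
  (forall t, defined_at G t -> I t.1),
  (forall s t, I s.1 -> defined_at G t -> lex_lt R s t -> defined_at G s),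
  ad_family (family G) &
  (forall t a, G (t, a) -> blocks (family G) (h t))].

Lemma stage_sets_sub (G G' : run) : G `<=` G' -> stage_sets G `<=` stage_sets G'.
Proof. by move=> GG' b [[t /GG' Gt] ne]; split=> //; exists t. Qed.

Lemma family_sub (G G' : run) : G `<=` G' -> family G `<=` family G'.
Proof. by move=> GG' b [col|/(stage_sets_sub GG') ?]; [left|right]. Qed.

Lemma valid_chain (F : set run) : F `<=` valid -> total_on F subset -> valid (\bigcup_(G in F) G).
Proof.
move=> FV tot; split.
- move=> t a a' [G1 F1 G1t] [G2 F2 G2t]; have [sub|sub] := tot _ _ F1 F2.
    by have [func _ _ _ _] := FV _ F2; apply: func (sub _ G1t) G2t.
  by have [func _ _ _ _] := FV _ F1; apply: func G1t (sub _ G2t).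
- by move=> t [a [G FG Gt]]; have [_ dom _ _ _] := FV _ FG; apply: dom; exists a.
- move=> s t Is [a [G FG Gt]] st; have [_ _ down _ _] := FV _ FG.
  by have [a' Ga'] := down s t Is (ex_intro _ a Gt) st; exists a', G.
- apply: (@ad_family_sub _ (columns `|` \bigcup_(S in stage_sets @` F) S)).
    move=> b [col|[[t [G FG Gt]] ne]]; first by left.
    by right; exists (stage_sets G); [exists G|split=> //; exists t].
  apply: ad_family_chain columns_ad _ _ => [_ [G FG <-]|_ _ [G1 F1 <-] [G2 F2 <-]].
    by have [_ _ _ ad _] := FV _ FG.
  by have [sub|sub] := tot _ _ F1 F2; [left|right]; apply: stage_sets_sub.
- move=> t a [G FG Gt]; have [_ _ _ _ blk] := FV _ FG.
  by apply: blocks_sub (blk _ _ Gt); apply: family_sub => z Gz; exists G.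
Qed.

Lemma valid_add (G : run) t a : valid G -> I t.1 -> ~ defined_at G t ->
  (forall s, I s.1 -> lex_lt R s t -> defined_at G s) ->
  (a = set0 /\ blocks (family G) (h t)) \/
  [/\ infinite_set a, (forall b, family G b -> finite_set (a `&` b)) & ~ conv (h t @^-1` a)] ->
  valid (G `|` [set (t, a)]).
Proof.
move=> [func dom down ad blk] It undef below choice_a.
have famS : family G `<=` family (G `|` [set (t, a)]) by apply: family_sub => ? ?; left.
have fam_add b : family (G `|` [set (t, a)]) b -> family G b \/ (b = a /\ a <> set0).
  move=> [col|[[s [Gs|[_ ->]]] ne]]; [by left; left|by left; right; split=> //; exists s|by right].
split.
- move=> s b b' [Gb|[es eb]] [Gb'|[es' eb']]; first exact: func Gb Gb'.
  + by case: undef; rewrite -es'; exists b.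
  + by case: undef; rewrite -es; exists b'.
  + by rewrite eb eb'.
- by move=> s [b [Gs|[-> _]]] //; apply: dom; exists b.
- move=> s s' Is [b [Gs'|[-> _]]] ss'; last by have [b' Gb'] := below s Is ss'; exists b'; left.
  by have [b' Gb'] := down s s' Is (ex_intro _ b Gs') ss'; exists b'; left.
- case: choice_a => [[a0 _]|[inf_a ad_a _]].
    by apply: ad_family_sub ad => b /fam_add [//|[_ []]].
  by apply: ad_family_sub (ad_family_add ad inf_a ad_a) => b /fam_add [?|[? _]]; [left|right].
- move=> s b [Gs|[-> _]]; first exact: blocks_sub famS (blk _ _ Gs).
  case: choice_a => [[_ blk_t]|[inf_a _ nc_a]]; first exact: blocks_sub famS blk_t.
  right; exists a => //; right; split; first by exists t; right.
  by move=> a0; apply: inf_a; rewrite a0.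
Qed.

Definition stage_accum (G : run) (f : Q01 -> nat) g : set RR :=
  [set r | exists m a, G ((g, m), a) /\ a <> set0 /\ accum (f @^-1` a) r].

Definition base_accum (f : Q01 -> nat) : set RR :=
  \bigcup_(n in [set: nat]) accum (f @^-1` [set n]) `|`
  \bigcup_(m in [set: nat]) accum (f @^-1` column m).

Lemma stage_accum_countable (G : run) f g : valid G ->
  (forall b, family G b -> conv (f @^-1` b)) -> countable (stage_accum G f g).
Proof.
move=> [func _ _ _ _] fam_conv.
rewrite (_ : stage_accum G f g = \bigcup_(m in [set: nat])
    [set r | exists a, G ((g, m), a) /\ a <> set0 /\ accum (f @^-1` a) r]).
  apply: bigcup_countable => // m _; apply: finite_set_countable.
  have [[a0 [Ga0 ne0]]|none] := pselect (exists a, G ((g, m), a) /\ a <> set0).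
    apply: (@sub_finite_set _ _ (accum (f @^-1` a0))).
      by move=> r [a [Ga [_]]]; rewrite (func _ _ _ Ga Ga0).
    by apply/conv_accum_finite/fam_conv; right; split=> //; exists (g, m).
  by apply: (@sub_finite_set _ _ set0) => // r [a [Ga [ne _]]]; apply: none; exists a.
by apply/seteqP; split=> [r [m [a ?]]|r [m _ [a ?]]]; [exists m => //; exists a|exists m, a].
Qed.

Lemma base_accum_countable f : (forall n, conv (f @^-1` [set n])) ->
  (forall m, conv (f @^-1` column m)) -> countable (base_accum f).
Proof.
move=> fiber_conv col_conv.
by apply: countableU; apply: bigcup_countable => // n _;
  apply/finite_set_countable/conv_accum_finite.
Qed.

Lemma family_accum_sub (G : run) f t b : (forall s, defined_at G s -> lex_lt R s t) ->
  family G b -> accum (f @^-1` b) `<=`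
  \bigcup_(g in [set g | R g t.1 /\ g <> t.1]) stage_accum G f g `|`
  (base_accum f `|` stage_accum G f t.1).
Proof.
move=> above [[m _ <-]|[[s Gs] ne]] r acc; first by right; left; right; exists m.
have Ks : stage_accum G f s.1 r by exists s.2, b; case: s Gs.
have [[Rs ns]|[<- _]] := above s (ex_intro _ b Gs); first by left; exists s.1.
by right; right.
Qed.

Lemma valid_extend (G : run) t : valid G -> I t.1 -> small [set g | R g t.1 /\ g <> t.1] ->
  ~ defined_at G t -> (forall s, I s.1 -> lex_lt R s t -> defined_at G s) ->
  (forall s, defined_at G s -> lex_lt R s t) ->
  exists a, valid (G `|` [set (t, a)]).
Proof.
move=> vG It small_t undef below above; set f := h t.
have [blk|unblk] := pselect (blocks (family G) f).
  by exists set0; apply: valid_add => //; left.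
have fiber_conv n : conv (f @^-1` [set n]).
  by apply: contrapT => nc; apply: unblk; left; exists n.
have fam_conv b : family G b -> conv (f @^-1` b).
  by move=> Gb; apply: contrapT => nc; apply: unblk; right; exists b.
have base_cnt := base_accum_countable fiber_conv (fun m => fam_conv _ (or_introl (imageT _ m))).
have [x [y [x_inj x_range x_cvg x_avoid y_avoid]]] := small_t (stage_accum G f)
  (fun g _ => stage_accum_countable g vG fam_conv)
  _ (countableU base_cnt (stage_accum_countable t.1 vG fam_conv)).
move: x_avoid y_avoid; set Z := (X in forall k, ~ X (x k)) => x_avoid y_avoid.
have lf b r : family G b -> ~ Z r -> locally_finite (f @^-1` b) r.
  by move=> Gb Zr; apply: contrapT => acc; exact: Zr (family_accum_sub above Gb acc).
have lf_fiber n k : locally_finite (f @^-1` [set n]) (x k).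
  by apply: contrapT => acc; apply: (x_avoid k); right; left; left; exists n.
have [a [inf_a nc_a] ad_a] := exists_ad_set_not_conv x_inj x_range x_cvg
  (fun b Gb => lf b y Gb y_avoid) (fun b k Gb => lf b (x k) Gb (x_avoid k)) lf_fiber.
by exists a; apply: valid_add => //; right.
Qed.

Hypotheses (R_wo : well_order R) (I_small : forall i, I i -> small [set g | R g i /\ g <> i])
  (h_surj : forall f, exists2 t, I t.1 & h t = f).

Lemma maximal_valid_total (G : run) : valid G -> (forall G', G `<` G' -> ~ valid G') ->
  forall t, I t.1 -> defined_at G t.
Proof.
move=> vG maxG t0 It0; apply: contrapT => undef0.
have [t [[It undef] t_min]] := lex_lt_min R_wo (ex_intro (fun t => I t.1 /\ ~ defined_at G t)
  t0 (conj It0 undef0)).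
have below s : I s.1 -> lex_lt R s t -> defined_at G s.
  by move=> Is st; apply: contrapT => nd; exact: (t_min s st).
have above s : defined_at G s -> lex_lt R s t.
  have [_ _ down _ _] := vG; move=> ds.
  have [e|[//|ts]] := lex_lt_trichotomy R_wo s t; first by case: undef; rewrite -e.
  by case: undef; exact: down t s It ds ts.
have [a va] := valid_extend vG It (I_small It) undef below above.
apply: maxG va; split=> [z Gz|sub]; first by left.
by apply: undef; exists a; apply: sub; right.
Qed.

Lemma exists_blocking_ad_family :
  exists2 A, ad_family A /\ infinite_set A & forall f, blocks A f.
Proof.
have [G [vG maxG]] := Zorn_bigcup valid_chain.
have [_ _ _ ad blk] := vG.
exists (family G); first by split=> //; apply: sub_infinite_set columns_infinite => b; left.
move=> f; have [t It <-] := h_surj f.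
by have [a Ga] := maximal_valid_total vG maxG It; exact: blk t a Ga.
Qed.

End Construction.

Lemma exists_small_indexing : exists (R : rel (Q01 -> nat)) (I : set (Q01 -> nat))
    (h : (Q01 -> nat) * nat -> Q01 -> nat),
  [/\ well_order R, (forall i, I i -> small [set g | R g i /\ g <> i]) &
      forall f, exists2 t, I t.1 & h t = f].
Proof.
have [R R_wo] := well_ordering_principle (Q01 -> nat).
have [all_small|] := pselect (forall i, small [set g | R g i /\ g <> i]).
  by exists R, setT, fst; split=> // f; exists (f, 0%N).
move=> /existsNP [i not_small].
have [i0 [not_small0 i0_min]] := @well_order_min _ _ R_wo
  (fun i => ~ small [set g | R g i /\ g <> i]) (ex_intro _ i not_small).
have [h h_surj] := not_small_surj not_small0.
exists R, [set g | R g i0 /\ g <> i0], h; split=> //.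
  move=> j [Rj ne]; apply: contrapT => not_small_j; apply: ne.
  exact: (well_order_anti R_wo Rj (i0_min j not_small_j)).
by move=> f; have [s [n [Ss <-]]] := h_surj f; exists (s, n).
Qed.

Theorem mainTheorem7 :
  exists A : set (set nat), MAD A /\ ~ katetov_le (ideal_of A) conv.
Proof.
have [R [I [h [R_wo I_small h_surj]]]] := exists_small_indexing.
have [A0 [ad0 inf0] blk0] := exists_blocking_ad_family R_wo I_small h_surj.
have [A MAD_A A0A] := ad_family_extend_MAD ad0 inf0.
by exists A; split=> //; apply: blocks_not_katetov => f; exact: blocks_sub A0A (blk0 f).
Qed.
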